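(* Let $f(x)=\ln(e-x)$ for $0\le x\le e-1$ and $f(x)=0$ for $x>e-1$. There is a function $\rho(\theta)$ with $\rho(\theta)\to1-1/e$ as $\theta\to0$ such that for every instance with largeness ratio $\theta=c_{\max}/B$, the utility $\sum_iu_if_{r_i}(c_i/u_i)$ obtained by $\mathrm{Truthful}(f)$ (with true costs) is at least $\rho(\theta)U^\star$.
   Context: Setting: a buyer with budget $B>0$ faces a finite set $S$ of sellers; seller $i$ owns one divisible item giving utility $u_i>0$ and has cost $c_i\ge0$; buying fraction $x_i\in[0,1]$ costs $x_ic_i$ and gives utility $x_iu_i$. $U^\star=\max\{\sum_iu_i\alpha_i:\alpha\in[0,1]^S,\sum_ic_i\alpha_i\le B\}$; $c_{\max}=\max_ic_i$. For a non-increasing $f:[0,\infty)\to[0,1]$ with $f(0)=1$, $f(e-1)=0$ and $r>0$: $f_r(x)=f(x/r)$, $Q_r(x)=xf_r(x)+\int_x^\infty f_r(y)\,dy$, $P_{i,r}(x)=u_iQ_r(x/u_i)$. $\mathrm{EnvyFree}(f)$ on cost vector $c$ has stopping rate $r^\star$, the value at which, decreasing $r$ from $\infty$, the nondecreasing function $r\mapsto\sum_iP_{i,r}(c_i)$ first equals $B$. $\mathrm{Truthful}(f)$: for each $i$, $r_i$ is the stopping rate of $\mathrm{EnvyFree}(f)$ on the cost vector obtained from $c$ by setting the $i$-th cost to $0$; it buys $f_{r_i}(c_i/u_i)$ of item $i$ and pays $P_{i,r_i}(c_i)$. *)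

From HB Require Import structures.
From mathcomp Require Import all_boot all_order all_algebra.
From mathcomp Require Import all_classical all_reals all_analysis.
Set Implicit Arguments. Unset Strict Implicit. Unset Printing Implicit Defensive.
Import Order.TTheory GRing.Theory Num.Theory.
Local Open Scope classical_set_scope.
Local Open Scope ring_scope.

(* The specific f of the statement: f(x) = ln(e - x) for x <= e - 1, 0 beyond.
   (Only evaluated at nonnegative arguments.) *)
Definition fln {R : realType} (x : R) : R :=
  if x <= expR 1 - 1 then ln (expR 1 - x) else 0.

Definition fr {R : realType} (f : R -> R) (r x : R) : R := f (x / r).

Definition Qr {R : realType} (f : R -> R) (r x : R) : R :=
  x * fr f r x + Rintegral (@lebesgue_measure R) `[x, +oo[%classic (fr f r).

Definition Pir {R : realType} (f : R -> R) (ui r x : R) : R := ui * Qr f r (x / ui).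

Definition envy_sum {R : realType} {S : finType} (f : R -> R) (u c : S -> R) (r : R) : R :=
  \sum_(i : S) Pir f (u i) r (c i).

(* Stopping rate of EnvyFree(f) on cost vector c: the first r (decreasing from
   +oo) at which envy_sum equals B, i.e. the largest r > 0 with envy_sum r = B. *)
Definition stopping_rate {R : realType} {S : finType} (f : R -> R) (B : R)
  (u c : S -> R) : R :=
  sup [set r : R | 0 < r /\ envy_sum f u c r = B].

Definition truthful_rate {R : realType} {S : finType} (f : R -> R) (B : R)
  (u c : S -> R) (i : S) : R :=
  stopping_rate f B u (fun j => if j == i then 0 else c j).

Definition truthful_utility {R : realType} {S : finType} (f : R -> R) (B : R)
  (u c : S -> R) : R :=
  \sum_(i : S) u i * fr f (truthful_rate f B u c i) (c i / u i).

Definition Ustar {R : realType} {S : finType} (B : R) (u c : S -> R) : R :=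
  sup [set x : R | exists a : S -> R,
         (forall i, 0 <= a i <= 1) /\ \sum_(i : S) c i * a i <= B /\
         x = \sum_(i : S) u i * a i].

(* c_max = max_i c_i (costs are nonnegative, so 0 is a neutral start) *)
Definition cmax {R : realType} {S : finType} (c : S -> R) : R :=
  \big[Num.max/0]_(i : S) c i.

From HB Require Import structures.
From mathcomp Require Import all_boot all_order all_algebra.
From mathcomp Require Import all_classical all_reals all_analysis.
From mathcomp Require Import ring lra.
Set Implicit Arguments. Unset Strict Implicit. Unset Printing Implicit Defensive.
Import Order.TTheory GRing.Theory Num.Theory.
Import numFieldNormedType.Exports.
Local Open Scope classical_set_scope.
Local Open Scope ring_scope.

(* Write [Q_r(x) = r q(x / r)] with [q] in closed form. The pointwise inequality
   [(1 - 1/e) a - (a s - q s) / e <= f s] for [a] in [[0, 1]] (equality at [a = 1]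
   below [e - 1]) is a dual certificate: summed with weights [u_i] at
   [s = c_i / (u_i r)] it shows that whenever the prices [P_{i,r}(c_i)] cover the
   cost of a fractional allocation [a], buying [f_r(c_i / u_i)] of each item earns
   at least [(1 - 1/e) sum_i u_i a_i]. Zeroing the cost of seller [i] raises the
   total price by at most [(e - 1) c_i <= (e - 1) c_max], so at the least truthful
   rate [r_i] the true-cost prices still cover [lam B], [lam = 1 - (e - 1) theta];
   every [r_j >= r_i] and [f] is nonincreasing, so applying the certificate to
   [lam a] for an optimal [a] gives the ratio [(1 - 1/e) lam]. *)

Section primitive.
Variable R : realType.
Local Notation e := (expR (1 : R)).
Local Notation mu := (@lebesgue_measure R).

Lemma is_derive_ln_affine (r y : R) : 0 < e - y / r ->
  is_derive y 1 (fun z => ln (e - z / r)) ((e - y / r)^-1 * - r^-1).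
Proof.
move=> hy; have dlin : is_derive y 1 (fun z : R => e - z / r) (- r^-1).
  by apply: is_derive_eq; rewrite scaler0 !add0r mul1r; congr (- _); exact: mulr1.
exact: @is_derive1_comp _ (@ln R) (fun z => e - z / r) y _ _ (is_derive1_ln hy) dlin.
Qed.

Definition ln_primitive (r y : R) : R := (y - r * e) * ln (e - y / r) - y.

Lemma is_derive_ln_primitive (r y : R) : 0 < r -> 0 < e - y / r ->
  is_derive y 1 (ln_primitive r) (ln (e - y / r)).
Proof.
move=> r0 hy; have dln := is_derive_ln_affine hy.
apply: is_derive_eq.
move: hy; set w := e - y / r => hw.
have -> : y - r * e = - (r * w) by rewrite /w; field; rewrite gt_eqF.
rewrite /GRing.scale /= subr0 mulr1.
by field; rewrite !gt_eqF.
Qed.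

Lemma Rintegral_ln_affine (r x : R) : 0 < r -> x < r * (e - 1) ->
  Rintegral mu `[x, r * (e - 1)] (fun y => ln (e - y / r)) =
  ln_primitive r (r * (e - 1)) - ln_primitive r x.
Proof.
move=> r0 xM.
have w_gt0 y : y <= r * (e - 1) -> 0 < e - y / r.
  by rewrite mulrC -ler_pdivrMr // => ?; lra.
have cG : {within `[x, r * (e - 1)], continuous (ln_primitive r)}.
  apply: derivable_within_continuous => y; rewrite in_itv /= => /andP[_ /w_gt0 hy].
  by have [] := is_derive_ln_primitive r0 hy.
have [_ cGx cGM] := (continuous_within_itvP _ xM).1 cG.
rewrite /Rintegral (@continuous_FTC2 _ _ (ln_primitive r)) //.
- apply: derivable_within_continuous => y; rewrite in_itv /= => /andP[_ /w_gt0 hy].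
  by have [] := is_derive_ln_affine hy.
- split => // y; rewrite in_itv /= => /andP[_ /ltW /w_gt0 hy].
  by have [] := is_derive_ln_primitive r0 hy.
- move=> y; rewrite in_itv /= => /andP[_ /ltW /w_gt0 hy].
  by have := is_derive_ln_primitive r0 hy; rewrite derive1E => ?; rewrite derive_val.
Qed.
End primitive.

Section fln_prices.
Variable R : realType.
Local Notation e := (expR (1 : R)).
Local Notation mu := (@lebesgue_measure R).

Lemma expR1_ge2 : 2 <= e.
Proof. by have := expR_ge1Dx (1 : R); rewrite (_ : 1 + 1 = 2). Qed.

Lemma onem_expR1V_gt0 : 0 < 1 - e^-1.
Proof. by have := expR1_ge2; rewrite subr_gt0 invf_lt1 ?expR_gt0 //; lra. Qed.

Lemma onem_expR1V_le1 : 1 - e^-1 <= 1.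
Proof. by rewrite gerDl oppr_le0 invr_ge0 ltW ?expR_gt0. Qed.

Lemma ln_ge_onemV (w : R) : 0 < w -> 1 - w^-1 <= ln w.
Proof.
move=> w0; have wV0 : 0 < w^-1 by rewrite invr_gt0.
have := @le_ln1Dx R (w^-1 - 1) ltac:(lra).
by rewrite addrC subrK lnV ?posrE //; lra.
Qed.

Lemma fln_le (s : R) : s <= e - 1 -> fln s = ln (e - s).
Proof. by rewrite /fln => ->. Qed.

Lemma fln_ge (s : R) : e - 1 <= s -> fln s = 0.
Proof.
rewrite /fln le_eqVlt => /orP[/eqP <-|/lt_geF -> //].
by rewrite lexx subKr ln1.
Qed.

Lemma fln0 : fln 0 = 1 :> R.
Proof. by have := expR1_ge2; rewrite fln_le ?subr0 ?expRK //; lra. Qed.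

Lemma fln_ge0 (s : R) : 0 <= fln s.
Proof.
have [sM|/ltW/fln_ge-> //] := leP s (e - 1).
by rewrite fln_le // ln_ge0 //; lra.
Qed.

Lemma fln_le1 (s : R) : 0 <= s -> fln s <= 1.
Proof.
move=> s0; have [sM|/ltW/fln_ge-> //] := leP s (e - 1).
rewrite fln_le // -[X in _ <= X]expRK ler_ln ?posrE ?expR_gt0 //; lra.
Qed.

Lemma fln_antitone (x y : R) : x <= y -> fln y <= fln x.
Proof.
move=> xy; have [yM|/ltW/fln_ge-> //] := leP y (e - 1); last exact: fln_ge0.
rewrite !fln_le ?(le_trans xy) // ler_ln ?posrE; lra.
Qed.

Definition qln (s : R) : R := if s <= e - 1 then e * ln (e - s) - e + s + 1 else 0.

Lemma qln_ge (s : R) : e - 1 <= s -> qln s = 0.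
Proof.
rewrite /qln le_eqVlt => /orP[/eqP <-|/lt_geF -> //].
by rewrite lexx subKr ln1; ring.
Qed.

Lemma Rintegral_fr_fln (r x : R) : 0 < r ->
  Rintegral mu `[x, +oo[ (fr fln r) = r * qln (x / r) - x * fln (x / r).
Proof.
move=> r0; have r0' : r != 0 by rewrite gt_eqF.
have [xM|Mx] := ltP x (r * (e - 1)); last first.
  have eMx : e - 1 <= x / r by rewrite ler_pdivlMr // mulrC.
  rewrite qln_ge // fln_ge // !mulr0 subr0.
  rewrite /Rintegral integral0_eq //= => y; rewrite in_itv /= andbT => xy.
  by rewrite /fr fln_ge // (le_trans eMx) // ler_pM2r ?invr_gt0 // ltW.
have sM : x / r <= e - 1 by rewrite ler_pdivrMr // mulrC ltW.
have -> : Rintegral mu `[x, +oo[ (fr fln r) =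
          Rintegral mu `[x, r * (e - 1)] (fun y => ln (e - y / r)).
  rewrite /Rintegral integral_mkcond [in RHS]integral_mkcond.
  congr fine; apply: eq_integral => y _; rewrite !patchE !mem_setE !in_itv /= andbT.
  have [xy|//] := leP x y; have [yM|My] := leP y (r * (e - 1)).
  - by rewrite /fr fln_le // ler_pdivrMr // mulrC.
  - by rewrite /fr fln_ge // ler_pdivlMr // mulrC ltW.
rewrite Rintegral_ln_affine // /ln_primitive /qln sM fln_le //.
by rewrite mulrAC divff // mul1r subKr ln1; field.
Qed.

Lemma Qr_fln (r x : R) : 0 < r -> Qr fln r x = r * qln (x / r).
Proof. by move=> r0; rewrite /Qr Rintegral_fr_fln // /fr addrC subrK. Qed.

Lemma qln0 : qln 0 = 1.
Proof.
have := expR1_ge2 => e2.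
by rewrite /qln subr0 expRK ifT; [ring | lra].
Qed.

Lemma qln_ge0 (s : R) : 0 <= s -> 0 <= qln s.
Proof.
rewrite /qln => s0; case: ifP => // sM.
have := expR1_ge2 => e2; set w := e - s.
have w0 : 0 < w by rewrite /w; lra.
(* [e ln w >= e (1 - 1/w) >= w - 1] for [1 <= w <= e]. *)
have key : w - 1 <= e * (1 - w^-1).
  rewrite -subr_ge0 (_ : _ - _ = (w - 1) * (e - w) / w); last by field; rewrite gt_eqF.
  by rewrite divr_ge0 ?(ltW w0) // mulr_ge0 // /w; lra.
have := ler_wpM2l (ltW (expR_gt0 1)) (ln_ge_onemV w0).
by rewrite -[s](subKr e) -/w; lra.
Qed.

Lemma onem_qln_le (s : R) : 0 <= s -> 1 - qln s <= (e - 1) * s.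
Proof.
move=> s0; have := expR1_ge2 => e2; rewrite /qln; case: ifP => sM; last first.
  by rewrite subr0; move: sM => /negbT; rewrite -ltNge => ?; nra.
set w := e - s.
have w0 : 0 < w by rewrite /w; lra.
(* [ln (w / e) >= 1 - e / w >= -s] because [e <= (e - s) (1 + s)]. *)
have ew : e / w <= 1 + s by rewrite ler_pdivrMr // /w; nra.
have := ln_ge_onemV (divr_gt0 w0 (expR_gt0 1)).
rewrite ln_div ?posrE ?expR_gt0 // expRK invf_div => hw.
have : e * (1 - ln w) <= e * s by rewrite ler_pM2l ?expR_gt0 //; lra.
lra.
Qed.

(* The dual certificate of the fractional knapsack LP, with equality at [a = 1]
   and [s <= e - 1]: this is what singles out [fln] and the ratio [1 - 1/e]. *)
Lemma fln_dual (s a : R) : 0 <= a <= 1 ->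
  (1 - e^-1) * a - e^-1 * (a * s - qln s) <= fln s.
Proof.
move=> /andP[a0 a1]; have := expR1_ge2 => e2; have e0 := expR_gt0 (1 : R).
have -> : (1 - e^-1) * a - e^-1 * (a * s - qln s) = (a * (e - 1 - s) + qln s) / e.
  by field; rewrite gt_eqF.
rewrite ler_pdivrMr // /qln /fln; case: ifP => sM; last by rewrite mul0r; nra.
have : a * (e - 1 - s) <= e - 1 - s by nra.
lra.
Qed.

End fln_prices.

Section truthful_mechanism.
Variables (R : realType) (S : finType) (u : S -> R).
Hypothesis u_gt0 : forall i, 0 < u i.
Local Notation e := (expR (1 : R)).

Definition zero_cost (c : S -> R) (i : S) : S -> R := fun j => if j == i then 0 else c j.

Lemma Pir_fln (ui r x : R) : 0 < r -> Pir fln ui r x = ui * r * qln (x / ui / r).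
Proof. by move=> r0; rewrite /Pir Qr_fln // mulrA. Qed.

(* Weak duality: sum the certificate [fln_dual] at [s = c_i / (u_i r)] with weights [u_i]. *)
Lemma envy_free_utility (c a : S -> R) (r : R) : 0 < r -> (forall i, 0 <= a i <= 1) ->
  \sum_i c i * a i <= envy_sum fln u c r ->
  (1 - e^-1) * \sum_i u i * a i <= \sum_i u i * fln (c i / u i / r).
Proof.
move=> r0 a01 spend.
have term i : (1 - e^-1) * (u i * a i) - (e^-1 / r) * (c i * a i - Pir fln (u i) r (c i))
              <= u i * fln (c i / u i / r).
  apply: le_trans _ (ler_wpM2l (ltW (u_gt0 i)) (fln_dual (c i / u i / r) (a01 i))).
  by rewrite Pir_fln // le_eqVlt; apply/orP; left; apply/eqP; field; rewrite !gt_eqF.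
apply: le_trans _ (ler_sum _ (fun i _ => term i)).
rewrite sumrB -!mulr_sumr sumrB -/(envy_sum fln u c r).
have : e^-1 / r * (\sum_i c i * a i - envy_sum fln u c r) <= 0.
  by rewrite mulr_ge0_le0 ?subr_le0 // divr_ge0 ?invr_ge0 ?ltW ?expR_gt0.
lra.
Qed.

Lemma envy_sum_zero_cost_le (c : S -> R) (i : S) (r : R) : 0 < r -> 0 <= c i ->
  envy_sum fln u (zero_cost c i) r <= envy_sum fln u c r + (e - 1) * c i.
Proof.
move=> r0 ci0; rewrite /envy_sum (bigD1 i) //= [in X in _ <= X](bigD1 i) //=.
rewrite /zero_cost eqxx (eq_bigr (fun j => Pir fln (u j) r (c j))) => [|j /negbTE -> //].
rewrite !Pir_fln // !mul0r qln0 mulr1.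
have s0 : 0 <= c i / u i / r by rewrite !divr_ge0 // ltW.
have := ler_wpM2l (ltW (mulr_gt0 (u_gt0 i) r0)) (onem_qln_le s0).
rewrite (_ : u i * r * ((e - 1) * (c i / u i / r)) = (e - 1) * c i); last first.
  by field; rewrite !gt_eqF.
lra.
Qed.

Lemma envy_sum_zero_cost_ge (c : S -> R) (i : S) (r : R) : 0 < r ->
  (forall j, 0 <= c j) -> u i * r <= envy_sum fln u (zero_cost c i) r.
Proof.
move=> r0 c0; rewrite /envy_sum (bigD1 i) //= /zero_cost eqxx Pir_fln // !mul0r qln0 mulr1.
rewrite lerDl; apply: sumr_ge0 => j _.
rewrite Pir_fln // !mulr_ge0 ?(ltW (u_gt0 j)) ?(ltW r0) // qln_ge0 //.
by case: ifP => // _; rewrite !divr_ge0 ?(ltW (u_gt0 j)) ?(ltW r0).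
Qed.

Lemma stopping_rate_ge (f : R -> R) (B r : R) (c : S -> R) :
  has_ubound [set r : R | 0 < r /\ envy_sum f u c r = B] ->
  0 < r -> envy_sum f u c r = B -> r <= stopping_rate f B u c.
Proof. by move=> ub r0 rB; apply: ub_le_sup. Qed.

Lemma stopping_rate_eq0 (f : R -> R) (B : R) (c : S -> R) :
  ~ (exists r, 0 < r /\ envy_sum f u c r = B) -> stopping_rate f B u c = 0.
Proof.
move=> none; rewrite /stopping_rate (_ : [set r | _] = set0) ?sup0 //.
by apply/seteqP; split => // r rB; apply: none; exists r.
Qed.

Variables (B : R) (c : S -> R).
Hypothesis c_ge0 : forall i, 0 <= c i.

Lemma truthful_rate_ge (i : S) (r : R) : 0 < r ->
  envy_sum fln u (zero_cost c i) r = B -> r <= truthful_rate fln B u c i.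
Proof.
apply: stopping_rate_ge; exists (B / u i) => r' [r0 <-].
by rewrite ler_pdivlMr // mulrC envy_sum_zero_cost_ge.
Qed.

(* Take [i] with the least truthful rate among the sellers whose rate is attained;
   any [r] attaining it is below every rate that is not the junk value [sup set0 = 0]. *)
Lemma exists_min_truthful_rate :
  (exists i r, 0 < r /\ envy_sum fln u (zero_cost c i) r = B) ->
  exists i r, [/\ 0 < r, envy_sum fln u (zero_cost c i) r = B &
    forall j, truthful_rate fln B u c j = 0 \/ r <= truthful_rate fln B u c j].
Proof.
move=> [i0 [r0 T0]].
pose P := [pred i | `[< exists r, 0 < r /\ envy_sum fln u (zero_cost c i) r = B >]].
have Pi0 : P i0 by apply/asboolP; exists r0.
have [i /asboolP[r [r_gt0 rB]] imin] := arg_minP (truthful_rate fln B u c) Pi0.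
exists i, r; split => // j.
have [Tj|noTj] := pselect (exists r, 0 < r /\ envy_sum fln u (zero_cost c j) r = B).
  by right; apply: le_trans (truthful_rate_ge r_gt0 rB) (imin j (asboolT Tj)).
by left; exact: stopping_rate_eq0.
Qed.

Lemma truthful_utility_ge_rate (r : R) : 0 < r ->
  (forall j, truthful_rate fln B u c j = 0 \/ r <= truthful_rate fln B u c j) ->
  \sum_j u j * fln (c j / u j / r) <= truthful_utility fln B u c.
Proof.
move=> r0 rates; apply: ler_sum => j _; rewrite ler_pM2l // /fr.
have cu0 : 0 <= c j / u j by rewrite divr_ge0 ?(ltW (u_gt0 j)).
case: (rates j) => [->|rj]; first by rewrite invr0 mulr0 fln0 fln_le1 // divr_ge0 ?(ltW r0).
by apply: fln_antitone; rewrite ler_wpM2l // lef_pV2 ?posrE // (lt_le_trans r0).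
Qed.

Lemma truthful_utility_ge (lam : R) (a : S -> R) : 0 <= lam <= 1 ->
  (forall i, (e - 1) * c i <= (1 - lam) * B) ->
  (forall i, 0 <= a i <= 1) -> \sum_i c i * a i <= B ->
  (1 - e^-1) * lam * \sum_i u i * a i <= truthful_utility fln B u c.
Proof.
move=> /andP[lam0 lam1] cB a01 aB.
have lam_a01 i : 0 <= lam * a i <= 1.
  by have /andP[? ?] := a01 i; rewrite mulr_ge0 //=; nra.
have [/exists_min_truthful_rate[i [r [r0 rB rates]]]|none] :=
  pselect (exists i r, 0 < r /\ envy_sum fln u (zero_cost c i) r = B).
  have spend : \sum_j c j * (lam * a j) <= envy_sum fln u c r.
    have := envy_sum_zero_cost_le r0 (c_ge0 i); rewrite rB.
    have := cB i; have : lam * \sum_j c j * a j <= lam * B by rewrite ler_wpM2l.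
    rewrite mulr_sumr (eq_bigr (fun j => c j * (lam * a j))) => [|j _]; last first.
      by rewrite mulrCA.
    lra.
  apply: le_trans _ (truthful_utility_ge_rate r0 rates).
  rewrite -mulrA mulr_sumr (eq_bigr (fun j => u j * (lam * a j))) => [|j _]; last first.
    by rewrite mulrCA.
  exact: envy_free_utility r0 lam_a01 spend.
have rates0 j : truthful_rate fln B u c j = 0.
  by apply: stopping_rate_eq0 => -[r rB]; apply: none; exists j, r.
rewrite /truthful_utility [X in _ <= X](eq_bigr u) => [|j _]; last first.
  by rewrite /fr rates0 invr0 mulr0 fln0 mulr1.
have ua0 j : 0 <= u j * a j by have /andP[? _] := a01 j; rewrite mulr_ge0 ?(ltW (u_gt0 j)).
apply: (@le_trans _ _ (\sum_j u j * a j)).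
  by rewrite ler_piMl ?sumr_ge0 // mulr_ile1 ?onem_expR1V_le1 // ltW ?onem_expR1V_gt0.
by apply: ler_sum => j _; have /andP[_ ?] := a01 j; rewrite ler_piMr ?(ltW (u_gt0 j)).
Qed.

End truthful_mechanism.

Section fractional_optimum.
Variables (R : realType) (S : finType) (B : R) (u c : S -> R).
Hypotheses (B_ge0 : 0 <= B) (u_ge0 : forall i, 0 <= u i).

Let feasible_value :=
  [set x : R | exists a : S -> R, (forall i, 0 <= a i <= 1) /\
     \sum_i c i * a i <= B /\ x = \sum_i u i * a i].

Let feasible_value0 : feasible_value 0.
Proof.
exists (fun=> 0); split => [i|]; first by rewrite lexx ler01.
by rewrite !big1 // => i _; rewrite mulr0.
Qed.

Lemma Ustar_ge0 : 0 <= Ustar B u c.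
Proof.
apply: ub_le_sup feasible_value0; exists (\sum_i u i) => _ [a [a01 [_ ->]]].
by apply: ler_sum => i _; have /andP[_ ?] := a01 i; rewrite ler_piMr.
Qed.

Lemma Ustar_le (k V : R) : 0 < k ->
  (forall a : S -> R, (forall i, 0 <= a i <= 1) -> \sum_i c i * a i <= B ->
     k * \sum_i u i * a i <= V) ->
  k * Ustar B u c <= V.
Proof.
move=> k0 bound; rewrite mulrC -ler_pdivlMr //.
apply: ge_sup; first by exists 0.
by move=> _ [a [a01 [aB ->]]]; rewrite ler_pdivlMr // mulrC bound.
Qed.

End fractional_optimum.

Definition truthful_ratio (R : realType) (theta : R) : R :=
  (1 - (expR 1)^-1) * (1 - (expR 1 - 1) * theta).

Lemma truthful_ratio_cvg (R : realType) :
  truthful_ratio x @[x --> (0 : R)^'+] --> 1 - (expR 1)^-1.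
Proof.
have -> : 1 - (expR 1)^-1 = truthful_ratio (0 : R).
  by rewrite /truthful_ratio mulr0 subr0 mulr1.
apply: cvg_at_right_filter; apply: cvgMr; apply: cvgB; first exact: cvg_cst.
by apply: cvgMr; exact: cvg_id.
Qed.

Theorem lemma11 (R : realType) :
  exists rho : R -> R,
    (rho x @[x --> 0^'+] --> 1 - (expR 1)^-1) /\
    forall (S : finType) (B : R) (u c : S -> R),
      0 < B -> (forall i, 0 < u i) -> (forall i, 0 <= c i) ->
      rho (cmax c / B) * Ustar B u c <= truthful_utility fln B u c.
Proof.
exists (@truthful_ratio R); split; first exact: truthful_ratio_cvg.
move=> S B u c B0 u0 c0; rewrite /truthful_ratio.
set lam := 1 - _ * _.
have e2 := expR1_ge2 R.
have cB i : (expR 1 - 1) * c i <= (1 - lam) * B.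
  rewrite /lam subKr -mulrA divfK ?gt_eqF // ler_wpM2l ?le_bigmax //; lra.
have util0 : 0 <= truthful_utility fln B u c.
  by apply: sumr_ge0 => i _; rewrite mulr_ge0 ?fln_ge0 ?(ltW (u0 i)).
have [lam0|lam0] := leP lam 0.
  have u0' i : 0 <= u i by exact: ltW.
  rewrite (le_trans _ util0) // mulr_le0_ge0 ?Ustar_ge0 ?(ltW B0) //.
  by rewrite mulr_ge0_le0 // ltW // onem_expR1V_gt0.
apply: Ustar_le => [||a a01 aB]; [exact: ltW | by rewrite mulr_gt0 ?onem_expR1V_gt0 |].
apply: truthful_utility_ge => //; rewrite (ltW lam0) /= /lam gerDl oppr_le0.
by rewrite mulr_ge0 ?divr_ge0 ?bigmax_ge_id ?(ltW B0) //; lra.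
Qed.
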